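(* Let $G$ be a connected graph and $C$ the vertex set of a block of $G$ such that $G[C]$ is a cycle. Then every connected forcing set $R$ of $G$ excludes at most one segment of $C$; that is, the set $C\setminus R$ is either empty or consists of cyclically consecutive vertices of the cycle $G[C]$ (it does not contain two disjoint, non-adjacent nonempty segments with vertices of $R$ lying between them on both sides).
   Context: A block is a maximal subgraph with no articulation point. Fix a cyclic orientation of $C$; for $u,v\in C$ the segment $(u\hookrightarrow v)$ is the set of vertices of $C$ strictly between $u$ and $v$ traveling along the cycle from $u$ to $v$ in that orientation. Zero forcing: given a set $S$ of initially colored vertices, if a colored vertex $u$ has exactly one uncolored neighbor $w$, then $w$ becomes colored; $S$ is a zero forcing set if repeated application colors all vertices. A connected forcing set is a zero forcing set $S$ with $G[S]$ connected. *)

From mathcomp Require Import all_boot.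
Set Implicit Arguments. Unset Strict Implicit. Unset Printing Implicit Defensive.

Definition simple_graph (T : finType) (e : rel T) : Prop :=
  symmetric e /\ irreflexive e.

Definition connected_in (T : finType) (e : rel T) (S : {set T}) : Prop :=
  forall x y, x \in S -> y \in S ->
    connect (fun a b => [&& a \in S, b \in S & e a b]) x y.

Definition connected_graph (T : finType) (e : rel T) : Prop :=
  connected_in e [set: T].

Definition no_cut_vertex (T : finType) (e : rel T) (S : {set T}) : Prop :=
  connected_in e S /\ forall v, v \in S -> connected_in e (S :\ v).

(* S is the vertex set of a block: a maximal subgraph (induced, w.l.o.g.)
   that is connected and has no articulation point. *)
Definition is_block (T : finType) (e : rel T) (S : {set T}) : Prop :=
  S != set0 /\ no_cut_vertex e S /\
  forall S' : {set T}, S \subset S' -> no_cut_vertex e S' -> S' = S.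

Definition induced_cycle (T : finType) (e : rel T) (C : {set T}) (s : seq T) : Prop :=
  [/\ uniq s, 3 <= size s, C = [set x in s] &
      forall x y, x \in C -> y \in C -> e x y = (y == next s x) || (x == next s y)].

Inductive zf_reach (T : finType) (e : rel T) : {set T} -> Prop :=
  | zf_done : zf_reach e [set: T]
  | zf_step (S : {set T}) (u w : T) :
      u \in S -> w \notin S -> e u w ->
      (forall x, e u x -> x \notin S -> x = w) ->
      zf_reach e (w |: S) -> zf_reach e S.

Definition zero_forcing_set (T : finType) (e : rel T) (S : {set T}) : Prop :=
  zf_reach e S.

Definition connected_forcing_set (T : finType) (e : rel T) (S : {set T}) : Prop :=
  zero_forcing_set e S /\ connected_in e S.

From mathcomp Require Import all_boot.
Set Implicit Arguments. Unset Strict Implicit. Unset Printing Implicit Defensive.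

(* A simple path between two vertices of a block C never leaves C: otherwise
   C together with the path would still have no cut vertex, contradicting the
   maximality of C. Hence C :&: R is connected whenever R is. If C :\: R were
   not a single arc of the cycle, it would contain two vertices x and y with
   vertices of R on both open arcs between them; but once x and y are deleted
   from the cycle, these two arcs lie in different components. *)

Section InducedConnectivity.
Variables (T : finType) (e : rel T).
Hypothesis e_sym : symmetric e.

Definition edge_in (W : {set T}) : rel T := fun a b => [&& a \in W, b \in W & e a b].

Lemma edge_in_connect_sym W : connect_sym (edge_in W).
Proof. by apply: sym_connect_sym => a b; rewrite /edge_in andbCA e_sym. Qed.

Lemma connect_edge_in_subset (W W' : {set T}) x y :
  W \subset W' -> connect (edge_in W) x y -> connect (edge_in W') x y.
Proof.
move=> sWW'; apply: connect_sub => a b /and3P [aW bW eab].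
by apply: connect1; rewrite /edge_in eab !(subsetP sWW').
Qed.

Lemma path_connect_in (W : {set T}) u q :
  path e u q -> {subset u :: q <= W} -> connect (edge_in W) u (last u q).
Proof.
move=> pq sW; apply/connectP; exists q => //.
by apply: (sub_in_path (P := mem W)) pq; [move=> a b aW bW eab; apply/and3P | apply/allP].
Qed.

Lemma connected_in_cover (W B : {set T}) :
  B \subset W -> connected_in e B ->
  (forall x, x \in W -> exists2 y, y \in B & connect (edge_in W) x y) ->
  connected_in e W.
Proof.
move=> sBW cB reachB x z xW zW.
have [x' x'B xx'] := reachB x xW; have [z' z'B zz'] := reachB z zW.
apply: connect_trans xx' (connect_trans (connect_edge_in_subset sBW (cB _ _ x'B z'B)) _).
by rewrite edge_in_connect_sym.
Qed.

Lemma no_cut_vertex_add_path (C : {set T}) u q :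
  no_cut_vertex e C -> u \in C -> path e u q -> uniq (u :: q) -> last u q \in C ->
  no_cut_vertex e (C :|: [set y in q]).
Proof.
move=> [cC cCw] uC pq uq vC; set S := C :|: [set y in q].
have CS : C \subset S by exact: subsetUl.
have reach w x : x \in q -> x != w -> exists2 y, y \in C :\ w & connect (edge_in (S :\ w)) x y.
  move=> xq xw; have qSw z : z \in u :: q -> z != w -> z \in S :\ w.
    move=> + zw; rewrite in_setD1 zw /S !inE => /predU1P [->|->]; by rewrite ?uC ?orbT.
  have [q1 [q2 def_q]] : exists q1 q2, q = q1 ++ x :: q2.
    by case/splitPr: xq => q1 q2; exists q1, q2.
  move: pq uq vC qSw; rewrite def_q -cat_rcons cat_path last_cat last_rcons.
  rewrite cat_rcons -cat_cons => /andP [p1 p2] uq vC qSw.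
  (* The path is simple, so w lies on at most one side of x: go the other way. *)
  have /hasPn disj : ~~ has (mem (u :: q1)) (x :: q2).
    by move: uq; rewrite cat_uniq => /and3P [].
  have [wq1 | wq1] := boolP (w \in u :: q1).
    exists (last x q2).
      rewrite in_setD1 vC andbT; apply: contraTneq wq1 => <-; exact/disj/mem_last.
    apply: path_connect_in p2 _ => z zq2; apply: qSw; first by rewrite mem_cat zq2 orbT.
    by apply: contraTneq wq1 => <-; exact: disj.
  exists u; first by rewrite in_setD1 uC andbT; apply: contraNneq wq1 => <-; exact: mem_head.
  rewrite edge_in_connect_sym -[x in connect _ _ x](last_rcons u q1).
  apply: path_connect_in p1 _ => z; rewrite -rcons_cons mem_rcons => /predU1P [->|zq1].
    by apply: qSw; rewrite // mem_cat mem_head orbT.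
  by apply: qSw; [rewrite mem_cat; apply/orP; left | apply: contraNneq wq1 => <-].
split.
  apply: (connected_in_cover CS cC) => x; rewrite /S !inE => /orP [xC|xq]; first by exists x.
  have xu : x != u by apply: contraTneq uq => <-; rewrite /= xq.
  have [y /setD1P [_ yC] xy] := reach u x xq xu.
  by exists y => //; apply: connect_edge_in_subset xy; exact: subsetDl.
move=> w _; apply: (@connected_in_cover _ (C :\ w)); first exact: setSD.
  have [/cCw // | wC] := boolP (w \in C).
  by have -> : C :\ w = C by apply/setDidPl; rewrite disjoint_sym disjoints1.
move=> x /setD1P [xw]; rewrite /S !inE => /orP [xC|xq]; last exact: reach.
by exists x; rewrite // in_setD1 xw xC.
Qed.

Lemma block_path_subset (C : {set T}) u q :
  is_block e C -> u \in C -> path e u q -> uniq (u :: q) -> last u q \in C ->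
  {subset q <= C}.
Proof.
move=> [_ [ncC maxC]] uC pq uq vC z zq.
rewrite -(maxC _ (subsetUl C [set y in q]) (no_cut_vertex_add_path ncC uC pq uq vC)).
by rewrite !inE zq orbT.
Qed.

Lemma block_setI_connected (C R : {set T}) :
  is_block e C -> connected_in e R -> connected_in e (C :&: R).
Proof.
move=> blockC cR a b /setIP [aC aR] /setIP [bC bR].
have /connectP [p pR def_b] := cR a b aR bR.
move: bC; rewrite def_b; case: (shortenP pR) => q qR uq _ bC.
have pq : path e a q by apply: sub_path qR => x y /and3P [].
have qC := block_path_subset blockC aC pq uq bC.
apply/connectP; exists q => //; apply: (sub_in_path (P := mem C)) qR.
  by move=> x y xC yC /and3P [xR yR exy]; rewrite /edge_in !inE xC yC xR yR.
by apply/allP => z; case/predU1P => [->|/qC].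
Qed.

End InducedConnectivity.

Lemma next_arc (T : eqType) (x y : T) (p1 p2 : seq T) z :
  z \in x :: p1 -> next (x :: p1 ++ y :: p2) z \in rcons p1 y.
Proof.
move=> zp1; have zs : z \in x :: p1 ++ y :: p2 by rewrite -cat_cons mem_cat zp1.
have lt_iz : index z (x :: p1) < size (rcons p1 y) by rewrite size_rcons index_mem.
rewrite next_nth zs -cat_cons index_cat zp1 -cat_rcons -(nth_take x lt_iz).
by rewrite take_size_cat // mem_nth.
Qed.

Section CycleArcs.
Variables (T : eqType) (x y : T) (p1 p2 : seq T).
Let s := x :: p1 ++ y :: p2.
Hypothesis uniq_s : uniq s.

Lemma next_into_arc c : c \in s -> c != x -> next s c \in p1 -> c \in p1.
Proof.
rewrite /s -cat_cons mem_cat => /orP [/predU1P [-> /eqP //|//] | cyp2] _ ncp1.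
have rot_s : rot (size (x :: p1)) s = y :: p2 ++ x :: p1 by rewrite /s -cat_cons rot_size_cat.
have := @next_arc _ y x p2 p1 c cyp2; rewrite -rot_s next_rot //.
have : uniq (y :: p2 ++ x :: p1) by rewrite -rot_s rot_uniq.
by rewrite -cat_rcons /= cat_uniq => /andP [_] => /and3P [_ /hasPn /(_ _ ncp1) /negPf ->].
Qed.

Lemma arc_closed a b : a \in s -> b \in s -> a \notin [:: x; y] -> b \notin [:: x; y] ->
  (b == next s a) || (a == next s b) -> (a \in p1) = (b \in p1).
Proof.
wlog -> : a b / b = next s a.
  by move=> IH aS bS axy bxy /orP [/eqP|/eqP] def; [|symmetry]; apply: IH => //; rewrite def eqxx.
move=> aS _ axy bxy _; rewrite !inE !negb_or in axy bxy.
case/andP: axy => ax _; case/andP: bxy => _ ny.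
apply/idP/idP => [ap1|]; last exact: next_into_arc.
by have := @next_arc _ x y p1 p2 a (@mem_behead _ (x :: p1) _ ap1); rewrite mem_rcons inE (negPf ny).
Qed.

End CycleArcs.

Section CycleSeparation.
Variables (T : finType) (e : rel T) (s : seq T).
Hypothesis uniq_s : uniq s.
Hypothesis e_cycle :
  forall u v, u \in s -> v \in s -> e u v = (v == next s u) || (u == next s v).

Lemma arc_separation i x y p1 p2 (W : {set T}) a b :
  rot i s = x :: p1 ++ y :: p2 -> {subset W <= s} -> x \notin W -> y \notin W ->
  a \in p1 -> b \in p2 -> ~~ connect (edge_in e W) a b.
Proof.
move=> rot_s Ws xW yW ap1 bp2; have uniq_r : uniq (x :: p1 ++ y :: p2) by rewrite -rot_s rot_uniq.
have offxy u : u \in W -> u \notin [:: x; y].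
  by move=> uW; rewrite !inE negb_or; apply/andP; split; apply: contraTneq uW => ->.
have arc_inv : closed (edge_in e W) p1.
  move=> u v /and3P [uW vW euv]; apply: (@arc_closed _ x y p1 p2 uniq_r); rewrite ?offxy //.
  1,2: by rewrite -rot_s mem_rot Ws.
  by rewrite -rot_s !next_rot // -e_cycle ?Ws.
have bNp1 : b \notin p1.
  move: uniq_r; rewrite cons_uniq cat_uniq => /and4P [_ _ /hasPn disj _].
  by apply: disj; rewrite inE bp2 orbT.
by apply/negP => /(closed_connect arc_inv); rewrite ap1 (negPf bNp1).
Qed.

End CycleSeparation.

Lemma split_first (T : Type) (P : pred T) s : has P s ->
  exists s1 z s2, [/\ s = s1 ++ z :: s2, all (predC P) s1 & P z].
Proof. by case/split_find => z s1 s2 Pz nPs1; exists s1, z, s2; rewrite cat_rcons all_predC. Qed.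

Section CyclicArcs.
Variables (T : eqType) (P : pred T).

Lemma arc_of_rot_split s i w1 w2 :
  rot i s = w1 ++ w2 -> all (predC P) w1 -> all P w2 ->
  exists i k, forall z, (z \in s) && ~~ P z = (z \in take k (rot i s)).
Proof.
move=> rot_s w1P w2P; exists i, (size w1) => z.
rewrite -(mem_rot i) rot_s take_size_cat // mem_cat.
have [zw1|_] := boolP (z \in w1); first exact: (allP w1P).
by have [zw2|] := boolP (z \in w2); rewrite //= (allP w2P).
Qed.

Lemma arc_or_two_gaps s :
  (exists i k, forall z, (z \in s) && ~~ P z = (z \in take k (rot i s))) \/
  exists i x y p1 p2,
    [/\ rot i s = x :: p1 ++ y :: p2, ~~ P x, ~~ P y, has P p1 & has P p2].
Proof.
have [|] := boolP (has P s); last first.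
  by rewrite -all_predC => sNP; left; apply: (@arc_of_rot_split _ 0 s [::]); rewrite ?rot0 ?cats0.
case/split_first => s1 [a [s2 [-> _ Pa]]].
have [|] := boolP (has (predC P) (s2 ++ s1)); last first.
  rewrite has_predC negbK => tP; left.
  by apply: (@arc_of_rot_split _ (size s1) [::] (a :: s2 ++ s1)); rewrite ?rot_size_cat //= Pa.
case/split_first => t1 [x [t2 [def_t t1P xNP]]].
move: t1P; rewrite all_predC has_predC negbK => t1P.
have rot_s : rot (size (a :: t1)) (rot (size s1) (s1 ++ a :: s2)) = (x :: t2) ++ a :: t1.
  by rewrite rot_size_cat cat_cons def_t -cat_cons rot_size_cat.
rewrite rot_rot_add in rot_s; set i := rot_add _ _ _ in rot_s.
have [|] := boolP (has P t2); last first.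
  by rewrite -all_predC => t2NP; left; apply: (arc_of_rot_split rot_s); apply/andP.
case/split_first => u1 [b [u2 [def_t2 u1NP Pb]]].
rewrite def_t2 in rot_s.
have [|] := boolP (has (predC P) u2); last first.
  rewrite has_predC negbK => u2P; left.
  apply: (arc_of_rot_split (i := i) (w1 := x :: u1) (w2 := b :: u2 ++ a :: t1)).
  - by rewrite rot_s /= -catA.
  - exact/andP.
  - by rewrite /= all_cat u2P /= Pb Pa.
case/split_first => v1 [y [v2 [def_u2 _ yNP]]].
right; exists i, x, y, (u1 ++ b :: v1), (v2 ++ a :: t1).
split => //; last by rewrite has_cat /= Pa orbT.
  by rewrite rot_s def_u2 /= -!catA /= -!catA.
by rewrite has_cat /= Pb orbT.
Qed.

End CyclicArcs.

Theorem lemma3 (T : finType) (e : rel T) (C : {set T}) (s : seq T) (R : {set T}) :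
  simple_graph e -> connected_graph e ->
  is_block e C -> induced_cycle e C s ->
  connected_forcing_set e R ->
  C :\: R = set0 \/
  exists i k, C :\: R = [set x in take k (rot i s)].
Proof.
move=> [e_sym _] _ blockC [uniq_s _ Cs e_cycle] [_ cR].
have e_s u v : u \in s -> v \in s -> e u v = (v == next s u) || (u == next s v).
  by move=> uS vS; apply: e_cycle; rewrite Cs inE.
have [[i [k arc]] | [i [x [y [p1 [p2 [rot_s xR yR /hasP [a ap1 aR] /hasP [b bp2 bR]]]]]]]] :=
  arc_or_two_gaps [in R] s.
  by right; exists i, k; apply/setP => z; rewrite Cs !inE andbC; exact: (arc z).
have inC z : z \in x :: p1 ++ y :: p2 -> z \in C.
  by move=> zr; rewrite Cs inE -(mem_rot i) rot_s.
have CRs : {subset C :&: R <= s} by move=> z /setIP [zC _]; rewrite Cs inE in zC.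
have outCR z : z \notin R -> z \notin C :&: R by rewrite inE => /negPf ->; rewrite andbF.
case/negP: (arc_separation uniq_s e_s rot_s CRs (outCR x xR) (outCR y yR) ap1 bp2).
apply: (block_setI_connected e_sym blockC cR); rewrite inE ?aR ?bR inC //.
  by rewrite inE mem_cat ap1 orbT.
by rewrite inE mem_cat inE bp2 !orbT.
Qed.
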